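(* In the setting of the context, two elements of $\mathbb J'$ are $\mathbb J$-conjugate if and only if they are $\mathbb J'$-conjugate.
   Context: Fix a prime $p$. $\mathbb J$ is a finite group, $\mathbb J_1$ a normal subgroup of $\mathbb J$ with center $Z$, and $\mathbb J'$ a subgroup of $\mathbb J$ with $\mathbb J=\mathbb J'\mathbb J_1$ and $\mathbb J'\cap\mathbb J_1\subset Z$. Assume: (i) $\mathbb J_1$ is a $p$-group which is either extraspecial of class $2$ or abelian; (ii) $\mathbb J'=T\mathbb J'_1$ with $T$ an abelian subgroup of $\mathbb J'$ and $\mathbb J'_1$ a normal $p$-subgroup which is either extraspecial of class $2$ with center $Z'\supset\mathbb J'_1\cap T$, or abelian (then $Z':=\mathbb J'_1$); (iii) $[\mathbb J'_1,\mathbb J_1]=1$; (iv) $\mathbb J'/\mathbb J'_1$ has order prime to $p$; (v) $Z'Z$ is contained in the center of $\mathbb J$ and $\mathbb J'_1\mathbb J_1$ is an extraspecial $p$-group of class $2$ with center $Z'Z$. Let $\theta$ be a faithful character of $Z$ and $\theta'$ a faithful character of $Z'$ agreeing on $Z\cap Z'$. *)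

From HB Require Import structures.
From mathcomp Require Import all_boot all_order all_algebra all_fingroup all_solvable all_field all_character.
Set Implicit Arguments. Unset Strict Implicit. Unset Printing Implicit Defensive.

Import GroupScope.

(* A p-group H is "extraspecial of class 2" (in the generalized sense of the
   paper, where the centre need not have prime order): H is a non-abelian
   p-group of nilpotency class 2, i.e. [H,H] is contained in the centre Z(H),
   and H/Z(H) is an elementary abelian p-group. *)
Definition extraspecial2 (gT : finGroupType) (p : nat) (H : {group gT}) : bool :=
  [&& p.-group H, ~~ abelian H, [~: H, H] \subset 'Z(H)
    & p.-abelem (H / 'Z(H))].

From HB Require Import structures.
From mathcomp Require Import all_boot all_order all_algebra all_fingroup all_solvable all_field all_character.
Set Implicit Arguments. Unset Strict Implicit. Unset Printing Implicit Defensive.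
Import GroupScope.

(* Conjugation by J' obviously stays inside J', so the content is the converse.
   Writing g in J as g = a * b with a in J' and b in J1, it suffices to show
   that an element u of J' whose J1-conjugate u ^ b lies again in J' is fixed
   by b.  The commutator z = [~ u, b] lies in J1 (J1 is normal) and in J'
   (since u ^ b = u * z), hence in J' :&: J1 <= Z(J1) <= Z(J): it is a central
   p-element.  With m = #|J' : J'1|, the power u ^+ m falls into J'1, which
   centralises J1; so u ^+ m = (u ^+ m) ^ b = (u * z) ^+ m = u ^+ m * z ^+ m,
   i.e. z ^+ m = 1.  As m is prime to p, z = 1.

   The argument uses only the normality of J1 and J'1, that J1 is a p-group,
   (iii), (iv), J' :&: J1 <= Z(J1) and Z(J1) <= Z(J) (part of (v)). *)

(* In a group G, the #|G : H|-th power of any element lies in a normal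
   subgroup H (Lagrange in the quotient G / H). *)
Lemma expg_index_normal (gT : finGroupType) (G H : {group gT}) (x : gT) :
  H <| G -> x \in G -> x ^+ #|G : H| \in H.
Proof.
move=> nsHG xG; have nHG := normal_norm nsHG.
have xN : x \in 'N(H) by apply: (subsetP nHG).
apply: coset_idr; first by rewrite groupX.
by rewrite morphX // -card_quotient // expg_cardG // mem_quotient.
Qed.

Lemma p_elt_p'_expg1 (gT : finGroupType) (p m : nat) (z : gT) :
  p.-elt z -> p^'.-nat m -> z ^+ m = 1 -> z = 1.
Proof.
move=> pz p'm /eqP; rewrite -order_dvdn => dvd_zm.
by apply/eqP; rewrite -order_eq1 (pnat_1 pz (pnat_dvd dvd_zm p'm)).
Qed.

Section ConjugationByJ1.

Variables (gT : finGroupType) (p : nat) (J J1 J' J'1 : {group gT}).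

Hypotheses (nsJ1J : J1 <| J) (sJ'J : J' \subset J).
Hypotheses (tiJ'J1 : J' :&: J1 \subset 'Z(J1)) (sZJ : 'Z(J1) \subset 'Z(J)).
Hypotheses (pJ1 : p.-group J1) (nsJ'1J' : J'1 <| J').
Hypotheses (cJ'1J1 : [~: J'1, J1] = 1) (p'J'J'1 : p^'.-nat #|J' : J'1|).

Lemma commg_J1_central (u b : gT) :
  u \in J' -> b \in J1 -> u ^ b \in J' ->
  [~ u, b] \in 'Z(J) /\ p.-elt [~ u, b].
Proof.
move=> uJ' bJ1 ubJ'.
have uN : u \in 'N(J1) by apply: (subsetP (normal_norm nsJ1J)); apply: (subsetP sJ'J).
have zJ1 : [~ u, b] \in J1 by rewrite commgEr groupMr // memJ_norm ?groupV.
have zJ' : [~ u, b] \in J' by rewrite commgEl groupMr ?groupV.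
split; last exact: mem_p_elt pJ1 zJ1.
by apply: (subsetP sZJ); apply: (subsetP tiJ'J1); rewrite inE zJ' zJ1.
Qed.

Lemma conj_J1_fixed (u b : gT) :
  u \in J' -> b \in J1 -> u ^ b \in J' -> u ^ b = u.
Proof.
move=> uJ' bJ1 ubJ'; set m := #|J' : J'1|.
have [/centerP [_ cJz] pz] := commg_J1_central uJ' bJ1 ubJ'.
have cuz : commute u [~ u, b] by apply/commute_sym/cJz/(subsetP sJ'J).
have umJ'1 : u ^+ m \in J'1 by apply: expg_index_normal.
have fix_um : (u ^+ m) ^ b = u ^+ m.
  have := mem_commg umJ'1 bJ1; rewrite cJ'1J1 => /set1P cm1.
  exact/conjg_fixP/eqP.
have zm1 : [~ u, b] ^+ m = 1.
  by apply: (@mulgI _ (u ^+ m)); rewrite -expgMn // -conjg_mulR -conjXg fix_um mulg1.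
by rewrite conjg_mulR (p_elt_p'_expg1 pz p'J'J'1 zm1) mulg1.
Qed.

End ConjugationByJ1.

Theorem mainTheorem9 (gT : finGroupType) (p : nat) (pr_p : prime p)
    (J J1 J' T J'1 : {group gT})
    (* J1 normal in J; J = J' J1; J' ∩ J1 ⊆ Z := Z(J1) *)
    (nJ1J : J1 <| J) (sJ'J : J' \subset J) (defJ : J' * J1 = J)
    (tiJ'J1 : J' :&: J1 \subset 'Z(J1))
    (* (i) *)
    (hJ1 : p.-group J1 /\ (extraspecial2 p J1 \/ abelian J1))
    (* (ii), with Z' := Z(J'1) (= J'1 when J'1 is abelian) *)
    (sTJ' : T \subset J') (abT : abelian T) (defJ' : T * J'1 = J')
    (nJ'1J' : J'1 <| J') (pJ'1 : p.-group J'1)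
    (hJ'1 : extraspecial2 p J'1 \/ abelian J'1)
    (sJ'1TZ' : J'1 :&: T \subset 'Z(J'1))
    (* (iii) *)
    (cJ'1J1 : [~: J'1, J1] = 1)
    (* (iv) *)
    (p'J'J'1 : p^'.-nat #|J' : J'1|)
    (* (v) *)
    (sZ'ZJ : 'Z(J'1) * 'Z(J1) \subset 'Z(J))
    (esJ'1J1 : extraspecial2 p (J'1 <*> J1))
    (defZ : 'Z(J'1 <*> J1) = 'Z(J'1) * 'Z(J1))
    (* faithful characters theta of Z and theta' of Z' agreeing on Z ∩ Z' *)
    (theta : 'CF('Z(J1))) (theta' : 'CF('Z(J'1)))
    (lin_theta : theta \is a linear_char) (ftheta : cfaithful theta)
    (lin_theta' : theta' \is a linear_char) (ftheta' : cfaithful theta')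
    (agree : {in 'Z(J1) :&: 'Z(J'1), forall z, theta z = theta' z}) :
  forall x y, x \in J' -> y \in J' -> (y \in x ^: J) = (y \in x ^: J').
Proof.
move=> x y xJ' yJ'.
have sZJ : 'Z(J1) \subset 'Z(J) := subset_trans (mulG_subr _ _) sZ'ZJ.
apply/idP/idP; last exact: (subsetP (imsetS _ sJ'J)).
case/imsetP=> g; rewrite -defJ => /mulsgP [a b aJ' bJ1 ->] def_y.
have xaJ' : x ^ a \in J' by rewrite groupJ.
have fix_xa : (x ^ a) ^ b = x ^ a.
  by apply: (conj_J1_fixed nJ1J sJ'J tiJ'J1 sZJ hJ1.1 nJ'1J' cJ'1J1) => //;
     rewrite -conjgM -def_y.
by apply/imsetP; exists a; rewrite // def_y conjgM fix_xa.
Qed.
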